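(* Let $k$ be a field and let $A$ be a just infinite $k$-algebra which is countably generated as a $k$-algebra and does not satisfy a polynomial identity. Then the extended center $C(A)$ of $A$ is a field extension of $k$ of countable dimension over $k$.
   Context: All rings are associative unital algebras over a field. A $k$-algebra $A$ is called just infinite if $\dim_k(A)=\infty$ and every nonzero two-sided ideal of $A$ has finite codimension in $A$; just infinite algebras are prime. For a prime ring $A$, the (right) Martindale ring of quotients $Q_r(A)$ consists of equivalence classes of pairs $(I,f)$ where $I$ is a nonzero two-sided ideal of $A$ and $f\colon I\to A$ is a right $A$-module homomorphism, two pairs being equivalent if the maps agree on the intersection of their domains; addition is $(I,f)+(J,g)=(I\cap J,f+g)$ and multiplication $(I,f)(J,g)=(JI,f\circ g)$. The extended center $C(A)$ is the center of $Q_r(A)$ (equivalently, classes of pairs $(I,f)$ with $f$ an $(A,A)$-bimodule map); it is a field extension of $k$. *)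

From HB Require Import structures.
From mathcomp Require Import all_boot all_algebra.
Set Implicit Arguments. Unset Strict Implicit. Unset Printing Implicit Defensive.
Import GRing.Theory.
Local Open Scope ring_scope.

Section Defs.
Variables (k : fieldType) (A : algType k).

Definition in_span (s : seq A) (a : A) : Prop :=
  exists c : nat -> k, a = \sum_(i < size s) c i *: s`_i.

Definition finite_dimensional : Prop := exists s : seq A, forall a, in_span s a.

Definition is_ideal (I : A -> Prop) : Prop :=
  [/\ I 0, (forall x y, I x -> I y -> I (x + y)),
      (forall a x, I x -> I (a * x)) & (forall a x, I x -> I (x * a))].

Definition nonzero_set (I : A -> Prop) : Prop := exists x, I x /\ x != 0.

Definition finite_codim (I : A -> Prop) : Prop :=
  exists s : seq A, forall a, exists y, I y /\
    exists c : nat -> k, a = y + \sum_(i < size s) c i *: s`_i.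

Definition just_infinite : Prop :=
  ~ finite_dimensional /\
  forall I, is_ideal I -> nonzero_set I -> finite_codim I.

Definition is_subalgebra (S : A -> Prop) : Prop :=
  [/\ S 1, (forall x y, S x -> S y -> S (x + y)),
      (forall x y, S x -> S y -> S (x * y)) & (forall c x, S x -> S (c *: x))].

Definition countably_generated : Prop :=
  exists g : nat -> A, forall S, is_subalgebra S -> (forall n, S (g n)) ->
    forall a, S a.

(* evaluation of the monomial x_{w_0} x_{w_1} ... at x_i := a i *)
Definition eval_word (a : nat -> A) (w : seq nat) : A := \prod_(i <- w) a i.

(* A satisfies a polynomial identity: a nonzero element
   sum_{w in ws} c(w) w of the free algebra k<x_0, x_1, ...>
   (ws a duplicate-free list of words) vanishing on all substitutions *)
Definition satisfies_PI : Prop :=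
  exists (ws : seq (seq nat)) (c : seq nat -> k),
    [/\ uniq ws, (exists2 w, w \in ws & c w != 0) &
        forall a : nat -> A, \sum_(w <- ws) c w *: eval_word a w = 0].

(* (I, f) represents an element of the extended center C(A):
   I a nonzero two-sided ideal, f : I -> A an (A,A)-bimodule map
   (only the values of f on I matter) *)
Definition central_pair (I : A -> Prop) (f : A -> A) : Prop :=
  [/\ is_ideal I, nonzero_set I,
      (forall x y, I x -> I y -> f (x + y) = f x + f y),
      (forall a x, I x -> f (a * x) = a * f x) &
      (forall a x, I x -> f (x * a) = f x * a)].

(* C(A) has countable dimension over k: there is a sequence of elements
   (J n, g n) of C(A) such that every element (I, f) of C(A) is equivalent
   (agrees on the intersection of domains) to a finite k-linear combination
   sum_{j<m} c_j (J j, g j) (whose domain is the intersection of the J j). *)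
Definition extended_center_countable_dim : Prop :=
  exists (J : nat -> A -> Prop) (g : nat -> A -> A),
    (forall n, central_pair (J n) (g n)) /\
    forall I f, central_pair I f ->
      exists (m : nat) (c : nat -> k), forall x, I x ->
        (forall j, (j < m)%N -> J j x) ->
        f x = \sum_(j < m) c j *: g j x.

End Defs.

From HB Require Import structures.
From mathcomp Require Import all_boot all_algebra all_fingroup.
From Stdlib Require Import Classical IndefiniteDescription.
Set Implicit Arguments. Unset Strict Implicit. Unset Printing Implicit Defensive.
Import GRing.Theory.
Local Open Scope ring_scope.

(* Just infinite algebras are prime, so an element (I, f) of the extended
   center is determined by the value f z at any nonzero z in I.  A non-PI
   algebra does not satisfy the standard identity of degree n+1, whereas the
   standard polynomial of degree n+1 takes values in every ideal of
   codimension at most n; this yields nonzero z_0, z_1, ... such that every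
   nonzero ideal contains some z_n.  For fixed n, (I, f) |-> f z_n is linear
   and injective on central pairs with z_n in I, with values in the
   countable-dimensional space A; choosing a central pair for each possible
   leading position of f z_n with respect to a countable spanning sequence of A
   gives an echelon basis, and these countably many families together span
   C(A). *)

Lemma sum_ord_delta (k : fieldType) (V : lmodType k) n t d (F : nat -> V) :
  (t < n)%N -> \sum_(i < n) (if i == t :> nat then d else 0) *: F i = d *: F t.
Proof.
move=> lt_t_n; rewrite (bigD1 (Ordinal lt_t_n)) //= eqxx big1 ?addr0 // => i neq_it.
by rewrite ifN ?scale0r //; apply: contra neq_it => /eqP eq_it; apply/eqP/val_inj.
Qed.

Section Span.
Variables (k : fieldType) (A : algType k).
Implicit Types (s t : seq A) (a x y : A).

Lemma in_span0 s : in_span s 0.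
Proof. by exists (fun _ => 0); rewrite big1 // => i _; rewrite scale0r. Qed.

Lemma in_spanD s x y : in_span s x -> in_span s y -> in_span s (x + y).
Proof.
move=> [c ->] [d ->]; exists (fun i => c i + d i).
by rewrite -big_split; apply: eq_bigr => i _; rewrite scalerDl.
Qed.

Lemma in_spanZ s r x : in_span s x -> in_span s (r *: x).
Proof.
move=> [c ->]; exists (fun i => r * c i).
by rewrite scaler_sumr; apply: eq_bigr => i _; rewrite scalerA.
Qed.

Lemma in_span_sum s I r (P : pred I) (F : I -> A) :
  (forall i, P i -> in_span s (F i)) -> in_span s (\sum_(i <- r | P i) F i).
Proof. by move=> h; apply: big_ind; [exact: in_span0 | exact: in_spanD |]. Qed.

Lemma in_span_mem s x : x \in s -> in_span s x.
Proof.
move=> sx; exists (fun i => if i == index x s then 1 else 0).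
by rewrite sum_ord_delta ?index_mem // scale1r nth_index.
Qed.

Lemma in_span_subset s t a :
  {subset s <= t} -> in_span s a -> in_span t a.
Proof.
move=> sub [c ->]; apply: in_span_sum => i _.
by apply/in_spanZ/in_span_mem/sub/mem_nth.
Qed.

Lemma in_span_catl s t a : in_span s a -> in_span (s ++ t) a.
Proof. by apply: in_span_subset => x sx; rewrite mem_cat sx. Qed.

Lemma in_span_catr s t a : in_span t a -> in_span (s ++ t) a.
Proof. by apply: in_span_subset => x tx; rewrite mem_cat tx orbT. Qed.

End Span.

Section Prime.
Variables (k : fieldType) (A : algType k).
Implicit Types (I P Q : A -> Prop) (a u v w x y : A).

Definition ideal_gen v x : Prop :=
  exists r : seq (A * A), x = \sum_(p <- r) p.1 * v * p.2.

Lemma ideal_gen_ideal v : is_ideal (ideal_gen v).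
Proof.
split.
- by exists [::]; rewrite big_nil.
- by move=> x y [r ->] [r' ->]; exists (r ++ r'); rewrite big_cat.
- move=> a x [r ->]; exists [seq (a * p.1, p.2) | p <- r].
  by rewrite big_map mulr_sumr; apply: eq_bigr => p _ /=; rewrite !mulrA.
- move=> a x [r ->]; exists [seq (p.1, p.2 * a) | p <- r].
  by rewrite big_map mulr_suml; apply: eq_bigr => p _ /=; rewrite !mulrA.
Qed.

Lemma ideal_gen_self v : ideal_gen v v.
Proof. by exists [:: (1, 1)]; rewrite big_seq1 /= mul1r mulr1. Qed.

Lemma ideal_gen_annl v w :
  (forall a, w * a * v = 0) -> forall y, ideal_gen v y -> w * y = 0.
Proof.
move=> wAv y [r ->]; rewrite mulr_sumr big1 // => p _.
by rewrite !mulrA wAv mul0r.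
Qed.

Lemma ideal_gen_annr v w :
  (forall a, v * a * w = 0) -> forall y, ideal_gen v y -> y * w = 0.
Proof.
move=> vAw y [r ->]; rewrite mulr_suml big1 // => p _.
by rewrite -!mulrA (mulrA v) vAw mulr0.
Qed.

Lemma ideal_scale I c x : is_ideal I -> I x -> I (c *: x).
Proof. by move=> [_ _ Il _] Ix; rewrite -mulr_algl; apply: Il. Qed.

(* Modulo [P] and [Q], every [a * x * b] reduces to a combination of the
   [s_i * x * t_j]. *)
Lemma finite_dimensional_of_annihilated P Q x :
  finite_codim P -> finite_codim Q -> finite_codim (ideal_gen x) ->
  (forall y, P y -> y * x = 0) -> (forall y, Q y -> x * y = 0) ->
  finite_dimensional A.
Proof.
move=> [s codP] [t codQ] [u codx] Px xQ.
pose L := [seq a * x * b | a <- s, b <- t].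
have AxA a b : in_span L (a * x * b).
  have [p [Pp [c ->]]] := codP a; have [q [Qq [d ->]]] := codQ b.
  rewrite mulrDl Px // add0r mulrDr -(mulrA _ x q) xQ // mulr0 add0r.
  rewrite mulr_suml mulr_suml; apply: in_span_sum => i _.
  rewrite -!scalerAl; apply: in_spanZ; rewrite mulr_sumr; apply: in_span_sum => j _.
  by rewrite -scalerAr; apply/in_spanZ/in_span_mem/allpairs_f; apply: mem_nth.
exists (L ++ u) => a; have [y [[r ->] [e ->]]] := codx a.
apply: in_spanD; first by apply/in_span_catl/in_span_sum => p _; apply: AxA.
by apply: in_span_catr; exists e.
Qed.

Definition prime_algebra : Prop :=
  forall u v, u != 0 -> v != 0 -> exists a, u * a * v != 0.

Lemma just_infinite_prime : just_infinite A -> prime_algebra.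
Proof.
move=> [infA codA] u v u0 v0; apply: NNPP => uAv.
have {}uAv a : u * a * v = 0 by apply/eqP; apply: contra_notT uAv; exists a.
have cod x : x != 0 -> finite_codim (ideal_gen x).
  move=> x0; apply: codA (ideal_gen_ideal x) _.
  by exists x; split; first exact: ideal_gen_self.
have Uv := ideal_gen_annr uAv.
apply: infA; have [[a vau0] | vAu] := classic (exists a, v * a * u != 0).
- apply: (finite_dimensional_of_annihilated (cod u u0) (cod v v0) (cod _ vau0)).
    by move=> y Uy; rewrite !mulrA Uv // !mul0r.
  by apply: ideal_gen_annl => b; rewrite -!mulrA (mulrA u) uAv !mulr0.
- have {}vAu a : v * a * u = 0 by apply/eqP; apply: contra_notT vAu; exists a.
  exact: (finite_dimensional_of_annihilated (cod u u0) (cod u u0) (cod v v0) Uv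
                                            (ideal_gen_annl vAu)).
Qed.

End Prime.

Section StandardPoly.
Variables (k : fieldType) (A : algType k).
Implicit Types (I : A -> Prop) (s : seq A) (u v : A).

Definition standard_poly m (x : 'I_m -> A) : A :=
  \sum_(p : 'S_m) ((-1) ^+ odd_perm p : k) *: \prod_(i < m) x (p i).

Definition upd m (x : 'I_m -> A) (j : 'I_m) v : 'I_m -> A :=
  fun i => if i == j then v else x i.

Lemma upd_id m (x : 'I_m -> A) j : upd x j (x j) =1 x.
Proof. by move=> i; rewrite /upd; case: eqP => // ->. Qed.

Lemma eq_standard_poly m (x y : 'I_m -> A) :
  x =1 y -> standard_poly x = standard_poly y.
Proof. by move=> xy; apply: eq_bigr => p _; under eq_bigr do rewrite xy. Qed.

(* Composing with the transposition of [i1] and [i2] is a sign-reversing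
   involution of the terms. *)
Lemma standard_poly_alternate m (x : 'I_m -> A) i1 i2 :
  i1 != i2 -> x i1 = x i2 -> standard_poly x = 0.
Proof.
move=> neq12 eqx; pose t := tperm i1 i2.
rewrite /standard_poly (bigID (fun p : 'S_m => odd_perm p)) /=.
apply: canLR (subrK _) _; rewrite add0r -sumrN (reindex_inj (mulIg t)).
have odd_pt p : odd_perm (p * t)%g = ~~ odd_perm p.
  by rewrite odd_permM odd_tperm neq12 addbT.
apply: eq_big => p; rewrite odd_pt // => /negPf p_even.
rewrite p_even /= expr1 expr0 scaleN1r scale1r; congr (- _).
by apply: eq_bigr => i _; rewrite permM /t; case: tpermP => // ->.
Qed.

Lemma prod_linear_at (T : eqType) (r : seq T) i0 (F : T -> A) c u v :
  uniq r -> i0 \in r ->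
  \prod_(i <- r) (if i == i0 then c *: u + v else F i) =
  c *: \prod_(i <- r) (if i == i0 then u else F i) +
  \prod_(i <- r) (if i == i0 then v else F i).
Proof.
elim: r => // a r IH /= /andP [a_r r_uniq]; rewrite in_cons !big_cons.
case/predU1P => [-> | i0_r].
  have off w : \prod_(i <- r) (if i == a then w else F i) = \prod_(i <- r) F i.
    rewrite big_seq [RHS]big_seq; apply: eq_bigr => i ir.
    by rewrite ifN //; apply: contraNneq a_r => <-.
  by rewrite eqxx !off mulrDl scalerAl.
have /negPf -> : a != i0 by apply: contraNneq a_r => ->.
by rewrite IH // mulrDr scalerAr.
Qed.

Lemma standard_poly_linear m (x : 'I_m -> A) j c u v :
  standard_poly (upd x j (c *: u + v)) =
  c *: standard_poly (upd x j u) + standard_poly (upd x j v).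
Proof.
rewrite /standard_poly scaler_sumr -big_split; apply: eq_bigr => p _ /=.
have perm_upd w : \prod_(i < m) upd x j w (p i) =
                  \prod_(i < m) (if i == (p^-1)%g j then w else x (p i)).
  by apply: eq_bigr => i _; rewrite /upd (canF_eq (permK p)).
rewrite !perm_upd prod_linear_at ?index_enum_uniq ?mem_index_enum //.
by rewrite scalerDr !scalerA mulrC.
Qed.

Lemma ideal_prod I (T : eqType) (r : seq T) (F : T -> A) i0 :
  is_ideal I -> i0 \in r -> I (F i0) -> I (\prod_(i <- r) F i).
Proof.
move=> [_ _ Il Ir]; elim: r => // a r IH; rewrite in_cons big_cons.
by case/predU1P => [-> | /IH IHr] Fi0; [apply: Ir | apply/Il/IHr].
Qed.

Lemma standard_poly_ideal I m (x : 'I_m -> A) j :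
  is_ideal I -> I (x j) -> I (standard_poly x).
Proof.
move=> idI Ixj; have [I0 ID _ _] := idI; apply: big_ind => // p _.
apply: ideal_scale => //; apply: (ideal_prod (i0 := (p^-1)%g j)) => //.
by rewrite permKV.
Qed.

Lemma standard_poly_pigeonhole s m (x : 'I_m -> A) :
  (size s < m)%N -> (forall i, x i \in s) -> standard_poly x = 0.
Proof.
move=> lt_s_m xs; have /injectivePn [i1 [i2 neq12 eqx]] : ~~ injectiveb x.
  apply/injectiveP => /map_inj_uniq x_uniq; move: lt_s_m; rewrite ltnNge => /negP; apply.
  rewrite -[m]card_ord -(size_codom x); apply: uniq_leq_size.
    by rewrite x_uniq enum_uniq.
  by move=> y /codomP [i ->].
exact: standard_poly_alternate neq12 eqx.
Qed.

Lemma standard_poly_upd_span I s m (x : 'I_m -> A) j y (c : nat -> k) :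
  is_ideal I -> (forall t, (t < size s)%N -> I (standard_poly (upd x j s`_t))) ->
  I y -> I (standard_poly (upd x j (y + \sum_(t < size s) c t *: s`_t))).
Proof.
move=> idI Is Iy; have [I0 ID _ _] := idI.
have Iupd u : I u -> I (standard_poly (upd x j u)).
  by move=> Iu; apply: (standard_poly_ideal (j := j)) => //; rewrite /upd eqxx.
rewrite -[y]scale1r standard_poly_linear scale1r; apply: (ID); first exact: Iupd.
apply: (big_ind (fun u => I (standard_poly (upd x j u)))) => [|u w Iu Iw|t _].
- exact: Iupd.
- by rewrite -[u]scale1r standard_poly_linear scale1r; apply: (ID).
- rewrite -[_ *: _]addr0 standard_poly_linear; apply: (ID); last exact: Iupd.
  exact: ideal_scale idI (Is _ (ltn_ord t)).
Qed.

(* Replace the arguments [x j], [x (j+1)], ... one at a time by elements of [s]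
   modulo [I]; once all of them are in [s], two of them coincide. *)
Lemma standard_poly_codim I s m (x : 'I_m -> A) : is_ideal I ->
  (forall a, exists y, I y /\ exists c : nat -> k, a = y + \sum_(i < size s) c i *: s`_i) ->
  (size s < m)%N -> I (standard_poly x).
Proof.
move=> idI codI lt_s_m.
suff in_s j : (j <= m)%N -> forall x : 'I_m -> A,
    (forall i : 'I_m, (j <= i)%N -> x i \in s) -> I (standard_poly x).
  by apply: (in_s m) => // i; rewrite leqNgt ltn_ord.
elim: j => [_ {}x xs | j IH lt_j_m {}x xs].
  by rewrite (standard_poly_pigeonhole lt_s_m) => [|i]; [case: idI | apply: xs].
pose j' := Ordinal lt_j_m; have [y [Iy [c xj]]] := codI (x j').
rewrite -(eq_standard_poly (upd_id x j')) xj.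
apply: (standard_poly_upd_span c idI _ Iy) => t lt_t.
apply: IH (ltnW lt_j_m) _ _ => i le_j_i; rewrite /upd; case: eqP => [_|neq].
  exact: mem_nth.
apply: xs; rewrite ltn_neqAle le_j_i andbT; apply/eqP => eq_ji.
by apply/neq/val_inj; rewrite /= eq_ji.
Qed.

End StandardPoly.

Section NonPI.
Variables (k : fieldType) (A : algType k).

Definition perm_word m (p : 'S_m) : seq nat := [seq val (p i) | i <- index_enum 'I_m].

Lemma perm_word_inj {m} : injective (@perm_word m).
Proof.
move=> p q /eq_in_map eq_pq; apply/permP => i; apply: val_inj.
by apply: eq_pq; apply: mem_index_enum.
Qed.

(* [standard_poly] evaluates the standard polynomial
   sum_p sgn(p) x_{p 0} ... x_{p (m-1)}, whose coefficients are nonzero. *)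
Lemma standard_poly_nonvanishing m : ~ satisfies_PI A ->
  exists a : nat -> A, standard_poly (fun i : 'I_m => a i) != 0.
Proof.
move=> nPI; apply: NNPP => std0; apply: nPI.
pose c w : k :=
  if [pick p : 'S_m | perm_word p == w] is Some p then (-1) ^+ odd_perm p else 0.
have c_word (p : 'S_m) : c (perm_word p) = (-1) ^+ odd_perm p.
  rewrite /c; case: pickP => [q /eqP eq_qp | /(_ p)]; last by rewrite eqxx.
  by rewrite (perm_word_inj eq_qp).
exists [seq perm_word p | p <- index_enum 'S_m], c; split.
- by rewrite map_inj_uniq ?index_enum_uniq //; apply: perm_word_inj.
- exists (perm_word (1%g : 'S_m)); first exact/map_f/mem_index_enum.
  by rewrite c_word odd_perm1 oner_neq0.
- move=> a; have std_a0 : standard_poly (fun i : 'I_m => a i) = 0.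
    by apply/eqP; apply: contra_notT std0; exists a.
  rewrite -[RHS]std_a0 big_map; apply: eq_bigr => p _.
  by rewrite c_word /eval_word big_map.
Qed.

(* A nonzero ideal of codimension at most [n] contains every value of the
   standard polynomial of degree [n+1]. *)
Lemma exists_seq_meeting_nonzero_ideals : just_infinite A -> ~ satisfies_PI A ->
  exists z : nat -> A, (forall n, z n != 0) /\
    forall I, is_ideal I -> nonzero_set I -> exists n, I (z n).
Proof.
move=> [_ codA] nPI.
have /functional_choice [a std_a] :
    forall n, exists a : nat -> A, standard_poly (fun i : 'I_n.+1 => a i) != 0.
  by move=> n; apply: standard_poly_nonvanishing.
exists (fun n => standard_poly (fun i : 'I_n.+1 => a n i)); split => // I idI nzI.
have [s codI] := codA I idI nzI.
by exists (size s); apply: standard_poly_codim idI codI _.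
Qed.

End NonPI.

Section SeqSpan.
Variables (k : fieldType) (V : lmodType k).
Implicit Types (b : nat -> V) (x y : V).

Definition span_prefix b N y : Prop :=
  exists c : nat -> k, y = \sum_(i < N) c i *: b i.

Definition in_seq_span b y : Prop := exists N, span_prefix b N y.

Lemma sum_ord_recr_if N (d : nat -> k) r (G : nat -> V) :
  \sum_(i < N.+1) (if (i < N)%N then d i else r) *: G i =
  \sum_(i < N) d i *: G i + r *: G N.
Proof.
by rewrite big_ord_recr /= ltnn; congr (_ + _); apply: eq_bigr => i _; rewrite ltn_ord.
Qed.

Lemma span_prefix_widen b N M y :
  (N <= M)%N -> span_prefix b N y -> span_prefix b M y.
Proof.
move=> leNM [c ->]; exists (fun i => if (i < N)%N then c i else 0).
rewrite (big_ord_widen _ (fun i => c i *: b i) leNM) big_mkcond.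
by apply: eq_bigr => i _; case: ifP; rewrite ?scale0r.
Qed.

Lemma span_prefix_eliminate b N x y :
  span_prefix b N.+1 x -> span_prefix b N.+1 y -> ~ span_prefix b N y ->
  exists r, span_prefix b N (x - r *: y).
Proof.
move=> [c ->] [e ey] y_notN.
have eN0 : e N != 0.
  apply/eqP => eN0; apply: y_notN; exists e.
  by rewrite ey big_ord_recr /= eN0 scale0r addr0.
exists (c N / e N), (fun i => c i - c N / e N * e i); rewrite ey !big_ord_recr /=.
rewrite scalerDr scalerA divfK // opprD addrACA subrr addr0 scaler_sumr -sumrB.
by apply: eq_bigr => i _; rewrite scalerA scalerBl.
Qed.

Lemma in_seq_span_mem b t : in_seq_span b (b t).
Proof.
by exists t.+1, (fun i => if i == t then 1 else 0); rewrite sum_ord_delta // scale1r.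
Qed.

Lemma in_seq_spanD b x y : in_seq_span b x -> in_seq_span b y -> in_seq_span b (x + y).
Proof.
move=> [N xN] [M yM]; exists (maxn N M).
have [c ->] := span_prefix_widen (leq_maxl N M) xN.
have [d ->] := span_prefix_widen (leq_maxr N M) yM.
by exists (fun i => c i + d i); rewrite -big_split; apply: eq_bigr => i _; rewrite scalerDl.
Qed.

Lemma in_seq_spanZ b r x : in_seq_span b x -> in_seq_span b (r *: x).
Proof.
move=> [N [c ->]]; exists N, (fun i => r * c i).
by rewrite scaler_sumr; apply: eq_bigr => i _; rewrite scalerA.
Qed.

Lemma in_seq_span_sum b I (r : seq I) (F : I -> V) :
  (forall i, in_seq_span b (F i)) -> in_seq_span b (\sum_(i <- r) F i).
Proof.
move=> spanF; apply: big_ind => //; last exact: in_seq_spanD.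
by exists 0%N, (fun _ => 0); rewrite big_ord0.
Qed.

End SeqSpan.

Lemma countably_generated_seq_span (k : fieldType) (A : algType k) :
  countably_generated A -> exists b : nat -> A, forall a, in_seq_span b a.
Proof.
move=> [gen genA]; pose b j := eval_word gen (odflt [::] (unpickle j)).
have span_word w : in_seq_span b (eval_word gen w).
  have <- : b (pickle w) = eval_word gen w by rewrite /b pickleK.
  exact: in_seq_span_mem.
exists b; apply: genA => [|n]; last first.
  by have := span_word [:: n]; rewrite /eval_word big_seq1.
split => [| x y | x y [N [c ->]] [M [d ->]] | r x]; last exact: in_seq_spanZ.
- by have := span_word [::]; rewrite /eval_word big_nil.
- exact: in_seq_spanD.
rewrite mulr_suml; apply: in_seq_span_sum => i.
rewrite mulr_sumr; apply: in_seq_span_sum => j.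
rewrite -scalerAl -scalerAr scalerA; apply: in_seq_spanZ.
have := span_word (odflt [::] (unpickle i) ++ odflt [::] (unpickle j)).
by rewrite /eval_word big_cat.
Qed.

Section CentralPairs.
Variables (k : fieldType) (A : algType k).
Implicit Types (I J : A -> Prop) (f g : A -> A) (x z : A).

Lemma central_pairB I J f g r z :
  central_pair I f -> central_pair J g -> I z -> J z -> z != 0 ->
  central_pair (fun x => I x /\ J x) (fun x => f x - r *: g x).
Proof.
move=> [[I0 ID Il Ir] _ fD fl fr] [[J0 JD Jl Jr] _ gD gl gr] Iz Jz z0; split.
- by split=> [//| x y [? ?] [? ?] | a x [? ?] | a x [? ?]]; split; auto.
- by exists z.
- by move=> x y [? ?] [? ?]; rewrite fD // gD // scalerDr opprD addrACA.
- by move=> a x [? ?]; rewrite fl // gl // mulrBr scalerAr.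
- by move=> a x [? ?]; rewrite fr // gr // mulrBl scalerAl.
Qed.

Lemma central_pair_eq0 I f z : prime_algebra A -> central_pair I f ->
  I z -> z != 0 -> f z = 0 -> forall x, I x -> f x = 0.
Proof.
move=> primeA [[_ _ Il Ir] _ _ fl fr] Iz z0 fz0 x Ix.
apply/eqP; apply: contraT => fx0; have [a] := primeA _ _ fx0 z0.
by rewrite -mulrA -fr // mulrA fl // fz0 mulr0 eqxx.
Qed.

Definition pivot (b : nat -> A) z0 i I f : Prop :=
  [/\ I z0, span_prefix b i.+1 (f z0) & ~ span_prefix b i (f z0)].

Definition pivot_family (b : nat -> A) z0 (J : nat -> A -> Prop) (g : nat -> A -> A) :=
  forall i, central_pair (J i) (g i) /\
    ((exists I f, central_pair I f /\ pivot b z0 i I f) -> pivot b z0 i (J i) (g i)).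

Lemma exists_pivot_families (b z : nat -> A) :
  exists (J : nat -> nat -> A -> Prop) (g : nat -> nat -> A -> A),
    forall n, pivot_family b (z n) (J n) (g n).
Proof.
have /functional_choice [Jg JgP] : forall ni : nat * nat,
    exists Jg : (A -> Prop) * (A -> A), central_pair Jg.1 Jg.2 /\
      ((exists I f, central_pair I f /\ pivot b (z ni.1) ni.2 I f) ->
       pivot b (z ni.1) ni.2 Jg.1 Jg.2).
  move=> ni; have [[I [f [cIf pivIf]]] | no_pivot] :=
    classic (exists I f, central_pair I f /\ pivot b (z ni.1) ni.2 I f).
    by exists (I, f).
  exists (fun _ => True, id); split=> [|/no_pivot //].
  by split=> //; exists 1; rewrite oner_neq0.
by exists (fun n i => (Jg (n, i)).1), (fun n i => (Jg (n, i)).2) => n i; apply: JgP (n, i).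
Qed.

(* Gaussian elimination against the pivot at [N], then induction on [N];
   [central_pair_eq0] handles [N = 0]. *)
Lemma pivot_family_span b z0 (J : nat -> A -> Prop) (g : nat -> A -> A) :
  prime_algebra A -> pivot_family b z0 J g -> z0 != 0 ->
  forall N I f, central_pair I f -> I z0 -> span_prefix b N (f z0) ->
  exists d : nat -> k, forall x, I x -> (forall i, (i < N)%N -> J i x) ->
    f x = \sum_(i < N) d i *: g i x.
Proof.
move=> primeA famJg z0_neq0; elim=> [|N IH] I f cIf Iz0 fz0_span.
  exists (fun _ => 0) => x Ix _; rewrite big_ord0.
  apply: (central_pair_eq0 primeA cIf Iz0 z0_neq0) => //.
  by case: fz0_span => c ->; rewrite big_ord0.
have [fz0_N | fz0_notN] := classic (span_prefix b N (f z0)).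
  have [d fd] := IH I f cIf Iz0 fz0_N.
  exists (fun i => if (i < N)%N then d i else 0) => x Ix Jx.
  by rewrite (sum_ord_recr_if N d _ (fun i => g i x)) scale0r addr0 fd // => i /ltnW /Jx.
have [cJg /(_ _) [|Jz0 gz0_span gz0_notN]] := famJg N.
  by exists I, f; split.
have [r fgz0_N] := span_prefix_eliminate fz0_span gz0_span gz0_notN.
have [d fgd] := IH _ _ (central_pairB r cIf cJg Iz0 Jz0 z0_neq0) (conj Iz0 Jz0) fgz0_N.
exists (fun i => if (i < N)%N then d i else r) => x Ix Jx.
rewrite (sum_ord_recr_if N d _ (fun i => g i x)) -fgd ?subrK // => [|i /ltnW /Jx //].
by split; last exact: Jx.
Qed.

(* Index the families [J n] by [nat] through [pickle]; junk indices are
   sent to the pair [(0, 0)]. *)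
Lemma countable_dim_of_families (J : nat -> nat -> A -> Prop) (g : nat -> nat -> A -> A) :
  (forall n i, central_pair (J n i) (g n i)) ->
  (forall I f, central_pair I f -> exists n N (d : nat -> k), forall x, I x ->
     (forall i, (i < N)%N -> J n i x) -> f x = \sum_(i < N) d i *: g n i x) ->
  extended_center_countable_dim A.
Proof.
move=> cJg span_Jg; pose idx j := odflt (0, 0)%N (@unpickle (nat * nat)%type j).
have idx_pickle n i : idx (pickle (n, i)) = (n, i) by rewrite /idx pickleK.
exists (fun j => J (idx j).1 (idx j).2), (fun j => g (idx j).1 (idx j).2).
split=> [j | I f cIf]; first exact: cJg.
have [n [N [d fd]]] := span_Jg I f cIf.
pose m := (\max_(i < N) (pickle (n, val i)).+1)%N.
have lt_m i : (i < N)%N -> (pickle (n, i) < m)%N.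
  move=> ltiN.
  exact: (leq_bigmax (F := fun i : 'I_N => (pickle (n, val i)).+1) (Ordinal ltiN)).
exists m, (fun j => \sum_(i < N) (if j == pickle (n, val i) then d i else 0)) => x Ix Jx.
have Jnx i : (i < N)%N -> J n i x.
  by move=> ltiN; have := Jx _ (lt_m i ltiN); rewrite idx_pickle.
rewrite fd //.
under [RHS]eq_bigr do rewrite scaler_suml.
rewrite exchange_big /=; apply: eq_bigr => i _.
rewrite (sum_ord_delta (d i) (fun j => g (idx j).1 (idx j).2 x) (lt_m i (ltn_ord i))).
by rewrite idx_pickle.
Qed.

End CentralPairs.

Theorem proposition6p2 (k : fieldType) (A : algType k) :
  just_infinite A -> countably_generated A -> ~ satisfies_PI A ->
  extended_center_countable_dim A.
Proof.
move=> infA /countably_generated_seq_span [b spanA] nPI.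
have primeA := just_infinite_prime infA.
have [z [z_neq0 z_meets]] := exists_seq_meeting_nonzero_ideals infA nPI.
have [J [g famJg]] := exists_pivot_families b z.
apply: (countable_dim_of_families (J := J) (g := g)) => [n i | I f cIf].
  by case: (famJg n i).
have [idI nzI _ _ _] := cIf; have [n Izn] := z_meets I idI nzI.
have [N fzn_span] := spanA (f (z n)).
exists n, N; exact: pivot_family_span primeA (famJg n) (z_neq0 n) N I f cIf Izn fzn_span.
Qed.
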